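(* Let $G$ be a graph with no induced subgraph isomorphic to $C_4$. Then $G$ is localizable if and only if every vertex of $G$ is contained in exactly one simplicial clique of $G$.
   Context: A clique is strong if it intersects every maximal independent set. A graph is localizable if its vertex set admits a partition into strong cliques. A clique $C$ of $G$ is simplicial if there is a vertex $v\in V(G)$ with $C=N[v]$, the closed neighborhood of $v$. *)

From mathcomp Require Import all_boot.
Set Implicit Arguments. Unset Strict Implicit. Unset Printing Implicit Defensive.

Section Graphs.
Variables (T : finType) (e : rel T).

Definition simple_graph : Prop := symmetric e /\ irreflexive e.

Definition closed_nbhd (v : T) : {set T} := [set u | (u == v) || e v u].

Definition is_clique (C : {set T}) : bool :=
  [forall x in C, forall y in C, (x != y) ==> e x y].

Definition is_independent (S : {set T}) : bool :=
  [forall x in S, forall y in S, ~~ e x y].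

Definition is_max_independent (S : {set T}) : bool :=
  maxset is_independent S.

Definition strong_clique (C : {set T}) : Prop :=
  is_clique C /\ forall S : {set T}, is_max_independent S -> C :&: S != set0.

Definition localizable : Prop :=
  exists P : {set {set T}}, partition P [set: T] /\ forall C, C \in P -> strong_clique C.

Definition simplicial_clique (C : {set T}) : Prop :=
  is_clique C /\ exists v : T, C = closed_nbhd v.

Definition has_induced_C4 : Prop :=
  exists a b c d : T,
    [/\ uniq [:: a; b; c; d],
        [&& e a b, e b c, e c d & e d a] &
        ~~ e a c && ~~ e b d].

End Graphs.

From mathcomp Require Import all_boot.

Set Implicit Arguments.
Unset Strict Implicit.
Unset Printing Implicit Defensive.

(* A closed neighbourhood meets every maximal independent set, so simplicial
   cliques are strong.  Conversely, let C be a strong clique of a C4-free graph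
   in which every vertex has a neighbour outside C.  Among the independent sets
   outside C take one dominating as many vertices of C as possible.  If a in C
   were undominated, add a neighbour u of a outside C and drop the neighbours
   of u: a vertex b of C dominated by some s ~ u of S stays dominated, by u,
   since otherwise u a b s is an induced 4-cycle.  So C is dominated by an
   independent set outside C, which extends to a maximal independent set
   missing C.  Hence strong cliques are exactly the simplicial ones, and as two
   simplicial cliques sharing a vertex coincide, a partition into strong
   cliques is the same thing as every vertex lying in one simplicial clique. *)

Section SimplicialCliques.
Variables (T : finType) (e : rel T).
Hypotheses (esym : symmetric e) (eirr : irreflexive e).

Lemma in_closed_nbhd v u : (u \in closed_nbhd e v) = (u == v) || e v u.
Proof. by rewrite inE. Qed.

Lemma mem_closed_nbhd_sym u v : (u \in closed_nbhd e v) = (v \in closed_nbhd e u).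
Proof. by rewrite !in_closed_nbhd eq_sym esym. Qed.

Lemma adj_neq x y : e x y -> x != y.
Proof. by apply: contraTneq => ->; rewrite eirr. Qed.

Lemma cliqueP (C : {set T}) :
  reflect {in C &, forall x y, x != y -> e x y} (is_clique e C).
Proof.
apply: (iffP forall_inP) => [cC x y xC yC | cC x xC].
  by move/forall_inP: (cC x xC) => /(_ y yC) /implyP.
by apply/forall_inP => y yC; apply/implyP; apply: cC.
Qed.

Lemma independentP (S : {set T}) :
  reflect {in S &, forall x y, ~~ e x y} (is_independent e S).
Proof.
apply: (iffP forall_inP) => [indS x y xS yS | indS x xS].
  by move/forall_inP: (indS x xS); apply.
by apply/forall_inP => y yS; apply: indS.
Qed.

Lemma clique_sub_closed_nbhd C v :
  is_clique e C -> v \in C -> C \subset closed_nbhd e v.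
Proof.
move=> /cliqueP cC vC; apply/subsetP => u uC; rewrite in_closed_nbhd.
by case: eqVneq => //= uv; rewrite esym cC.
Qed.

Lemma simplicial_closed_nbhd_eq x y :
  is_clique e (closed_nbhd e x) -> is_clique e (closed_nbhd e y) ->
  y \in closed_nbhd e x -> closed_nbhd e x = closed_nbhd e y.
Proof.
move=> cx cy yx; apply/eqP.
by rewrite eqEsubset !clique_sub_closed_nbhd // mem_closed_nbhd_sym.
Qed.

Lemma closed_nbhd_meets_max_independent v S :
  is_max_independent e S -> closed_nbhd e v :&: S != set0.
Proof.
move=> /maxsetP [/independentP indS maxS]; apply/set0Pn.
have [vS | vNS] := boolP (v \in S).
  by exists v; rewrite inE in_closed_nbhd eqxx.
have [/exists_inP [u uS evu] | /exists_inPn noNb] := boolP [exists u in S, e v u].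
  by exists u; rewrite inE in_closed_nbhd evu orbT.
have indvS : is_independent e (v |: S).
  apply/independentP => x y; rewrite !in_setU1.
  case/predU1P => [-> | xS] /predU1P [-> | yS].
  - by rewrite eirr.
  - exact: noNb.
  - by rewrite esym noNb.
  - exact: indS.
by move: vNS; rewrite -(maxS _ indvS (subsetUr _ _)) setU11.
Qed.

Hypothesis noC4 : ~ has_induced_C4 e.

Lemma C4_free_chord a b c d :
  a != c -> b != d -> e a b -> e b c -> e c d -> e d a -> ~~ e a c -> e b d.
Proof.
move=> ac bd eab ebc ecd eda nac; apply/negPn/negP => nbd; apply: noC4.
exists a, b, c, d; split; last by rewrite nac.
  rewrite /= !inE !negb_or ac bd (adj_neq eab) (adj_neq ebc) (adj_neq ecd).
  by rewrite eq_sym (adj_neq eda).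
by rewrite eab ebc ecd eda.
Qed.

Definition dominated (C S : {set T}) := [set a in C | [exists s in S, e a s]].

Lemma independent_swap (S : {set T}) u :
  is_independent e S -> is_independent e (u |: [set s in S | ~~ e u s]).
Proof.
move=> /independentP indS; apply/independentP => x y; rewrite !in_setU1 !inE.
case/predU1P => [-> | /andP [xS nux]] /predU1P [-> | /andP [yS nuy]] //.
- by rewrite eirr.
- by rewrite esym.
- exact: indS.
Qed.

Lemma dominated_swap (C S : {set T}) a u :
  is_clique e C -> S \subset ~: C -> a \in C -> a \notin dominated C S ->
  u \notin C -> e a u ->
  dominated C S \proper dominated C (u |: [set s in S | ~~ e u s]).
Proof.
move=> /cliqueP cC SC aC aNdom uNC eau.
have aNS s : s \in S -> ~~ e a s.
  by move=> sS; apply: contra aNdom => eas; rewrite inE aC; apply/exists_inP; exists s.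
have sNC s : s \in S -> s \notin C by move=> /(subsetP SC); rewrite inE.
rewrite properE; apply/andP; split.
  apply/subsetP => b; rewrite !inE => /andP [bC /exists_inP [s sS ebs]].
  rewrite bC; apply/exists_inP.
  have [eus | nus] := boolP (e u s); last by exists s; rewrite // !inE sS nus orbT.
  exists u; first exact: setU11.
  have ab : a != b by apply: contraNneq aNdom => ->; rewrite inE bC; apply/exists_inP; exists s.
  have a_s : a != s by apply: contraNneq (sNC s sS) => <-.
  have b_u : b != u by apply: contraNneq uNC => <-.
  have esu : e s u by rewrite esym.
  have eua : e u a by rewrite esym.
  exact: C4_free_chord a_s b_u (cC a b aC bC ab) ebs esu eua (aNS s sS).
apply/subsetPn; exists a => //; rewrite inE aC; apply/exists_inP.
by exists u; rewrite ?setU11.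
Qed.

Lemma independent_dominating_set C :
  is_clique e C -> (forall a, a \in C -> exists2 u, u \notin C & e a u) ->
  exists S, [/\ is_independent e S, S \subset ~: C & dominated C S = C].
Proof.
move=> cC nbC.
pose P S := is_independent e S && (S \subset ~: C).
have P0 : P set0 by rewrite /P sub0set andbT; apply/independentP => x; rewrite inE.
have [S /andP [indS SC] maxS] := arg_maxnP (fun S => #|dominated C S|) P0.
exists S; split => //; apply/eqP; rewrite eqEsubset; apply/andP; split.
  by apply/subsetP => a; rewrite inE => /andP [].
apply/subsetP => a aC; apply: contraT => aNdom.
have [u uNC eau] := nbC a aC.
have PS' : P (u |: [set s in S | ~~ e u s]).
  rewrite /P independent_swap //; apply/subsetP => x.
  by rewrite !inE => /predU1P [-> | /andP [/(subsetP SC) + _]]; rewrite ?inE.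
have S_lt_S' := proper_card (dominated_swap cC SC aC aNdom uNC eau).
by move: (leq_trans S_lt_S' (maxS _ PS')); rewrite ltnn.
Qed.

Lemma strong_clique_simplicial C : strong_clique e C -> simplicial_clique e C.
Proof.
move=> [cC strongC]; split => //.
have [/exists_inP [v vC nbv] | /exists_inPn noSimp] :=
  boolP [exists v in C, closed_nbhd e v \subset C].
  by exists v; apply/eqP; rewrite eqEsubset nbv clique_sub_closed_nbhd.
have nbC a : a \in C -> exists2 u, u \notin C & e a u.
  move=> aC; have /subsetPn [u] := noSimp a aC.
  by rewrite in_closed_nbhd => /predU1P [-> | eau] uNC; [rewrite aC in uNC | exists u].
have [S [indS _ domS]] := independent_dominating_set cC nbC.
have [M maxM SM] := maxset_exists indS.
have /independentP indM := maxsetp maxM.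
case/set0Pn: (strongC M maxM) => a; rewrite inE => /andP [aC aM].
move: aC; rewrite -domS inE => /andP [_ /exists_inP [s sS eas]].
by move: (indM a s aM (subsetP SM s sS)); rewrite eas.
Qed.

Definition simplicial_cliques : {set {set T}} :=
  [set C | is_clique e C && [exists v, C == closed_nbhd e v]].

Lemma simplicial_cliquesP C :
  reflect (simplicial_clique e C) (C \in simplicial_cliques).
Proof.
rewrite inE; apply: (iffP andP) => [[cC /existsP [v /eqP CE]] | [cC [v CE]]].
  by split=> //; exists v.
by split=> //; apply/existsP; exists v; apply/eqP.
Qed.

Lemma simplicial_mem_partition P C :
  partition P [set: T] -> {in P, forall B, simplicial_clique e B} ->
  simplicial_clique e C -> C \in P.
Proof.
move=> partP simpP [cC [x CE]]; subst C.
have : x \in cover P by rewrite (cover_partition partP) inE.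
case/bigcupP => B BP xB; have [cB [w BE]] := simpP B BP; subst B.
by rewrite -(simplicial_closed_nbhd_eq cB cC xB).
Qed.

Lemma simplicial_cliques_partition :
  (forall v, exists! C, simplicial_clique e C /\ v \in C) ->
  partition simplicial_cliques [set: T].
Proof.
move=> uniqC; apply/and3P; split.
- apply/eqP/setP => v; rewrite inE; have [C [[/simplicial_cliquesP CS vC] _]] := uniqC v.
  by apply/bigcupP; exists C.
- apply/trivIsetP => A B /simplicial_cliquesP sA /simplicial_cliquesP sB nAB.
  apply/pred0P => x /=; apply/negP => /andP [xA xB]; have [C [_ CE]] := uniqC x.
  by move: nAB; rewrite -(CE A (conj sA xA)) -(CE B (conj sB xB)) eqxx.
- apply/negP => /simplicial_cliquesP [_ [v v0]].
  by move/setP/(_ v): v0; rewrite inE in_closed_nbhd eqxx.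
Qed.

End SimplicialCliques.

Theorem mainTheorem10 (T : finType) (e : rel T) :
  simple_graph e -> ~ has_induced_C4 e ->
  (localizable e <->
   forall v : T, exists! C : {set T}, simplicial_clique e C /\ v \in C).
Proof.
move=> [esym eirr] noC4; split.
- move=> [P [partP strongP]] v.
  have simpP : {in P, forall B, simplicial_clique e B}.
    by move=> B /strongP; apply: strong_clique_simplicial.
  have triv := partition_trivIset partP.
  have vP : v \in cover P by rewrite (cover_partition partP) inE.
  exists (pblock P v); split.
    by split; [apply: simpP; rewrite pblock_mem | rewrite mem_pblock].
  move=> C [simpC vC]; have CP := simplicial_mem_partition esym partP simpP simpC.
  by rewrite (def_pblock triv CP vC).
- move=> uniqC; exists (simplicial_cliques e).
  split; first exact: simplicial_cliques_partition.
  move=> C /simplicial_cliquesP [cC [v CE]]; split=> // S.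
  by rewrite CE; apply: closed_nbhd_meets_max_independent.
Qed.
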